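(* Let $\mathcal{D}$ be a dataset in normal form and $\Pi$ a consistent DatalogMTL program. Then $\mathcal{R}$ is an $s$-repair of $\mathcal{D}$ w.r.t. $\Pi$ if and only if $\mathcal{R}$ is a $\subseteq$-maximal $\Pi$-consistent subset of $\mathcal{D}$; and $\mathcal{C}$ is an $s$-conflict of $\mathcal{D}$ w.r.t. $\Pi$ if and only if $\mathcal{C}$ is a $\subseteq$-minimal $\Pi$-inconsistent subset of $\mathcal{D}$.
   Context: DatalogMTL programs, datasets (finite sets of facts $\alpha@\iota$ with $\alpha$ a ground atom and $\iota$ a non-empty interval of the timeline), models, $\Pi$-consistency (existence of a common model of the facts and of $\Pi$) and entailment are as usual. A set of facts is in normal form if it contains no two distinct facts $\alpha@\iota_1,\alpha@\iota_2$ with the same atom such that $\iota_1\cup\iota_2$ (as a set of timepoints) is the set of timepoints of an interval. For sets of facts $\mathcal{B},\mathcal{B}'$: $\mathcal{B}'\sqsubseteq^p\mathcal{B}$ if $\mathcal{B}\models\alpha@\iota'$ for every $\alpha@\iota'\in\mathcal{B}'$; $\mathcal{B}'\sqsubseteq^i\mathcal{B}$ if $\mathcal{B}'\sqsubseteq^p\mathcal{B}$ and for every $\alpha@\iota\in\mathcal{B}$ there is at most one $\alpha@\iota'\in\mathcal{B}'$ with $\iota'\subseteq\iota$; $\mathcal{B}'\sqsubseteq^s\mathcal{B}$ if $\mathcal{B}'\subseteq\mathcal{B}$ and $\mathcal{B}'\sqsubseteq^i\mathcal{B}$; $\mathcal{B}'\sqsubset^s\mathcal{B}$ if $\mathcal{B}'\sqsubseteq^s\mathcal{B}$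 and not $\mathcal{B}\sqsubseteq^s\mathcal{B}'$. An $s$-repair of $\mathcal{D}$ w.r.t. $\Pi$ is a set $\mathcal{R}$ in normal form, $\Pi$-consistent, with $\mathcal{R}\sqsubseteq^s\mathcal{D}$, such that there is no $\Pi$-consistent $\mathcal{R}'$ with $\mathcal{R}\sqsubset^s\mathcal{R}'\sqsubseteq^s\mathcal{D}$. An $s$-conflict of $\mathcal{D}$ w.r.t. $\Pi$ is a set $\mathcal{C}$ in normal form, $\Pi$-inconsistent, with $\mathcal{C}\sqsubseteq^s\mathcal{D}$, such that there is no $\Pi$-inconsistent $\mathcal{C}'$ with $\mathcal{C}'\sqsubset^s\mathcal{C}$. *)

From HB Require Import structures.
From mathcomp Require Import all_boot all_order all_algebra.
Set Implicit Arguments. Unset Strict Implicit. Unset Printing Implicit Defensive.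
Import Order.TTheory GRing.Theory Num.Theory.
Local Open Scope ring_scope.

(** Timeline: rationals.  Intervals: mathcomp [interval rat]
    (endpoints in Q ∪ {±∞}, open or closed).  Non-empty intervals have a
    unique representation, so equality of facts is equality of sets. *)
Definition itv := interval rat.

(** list membership in Prop (no decidable equality needed) *)
Fixpoint inl {T : Type} (x : T) (s : seq T) : Prop :=
  match s with [::] => False | y :: s' => y = x \/ inl x s' end.

Inductive term : Type := TVar (x : nat) | TCst (c : nat).

Inductive matom : Type :=
  | MTop
  | MBot
  | MRel (p : nat) (ts : seq term)
  | MBoxMinus (r : itv) (A : matom)
  | MBoxPlus (r : itv) (A : matom)
  | MDiaMinus (r : itv) (A : matom)
  | MDiaPlus (r : itv) (A : matom)
  | MSince (r : itv) (A B : matom)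
  | MUntil (r : itv) (A B : matom).

(** A rule  A1 ∧ ... ∧ Ak → H ; the head ⊥ is encoded as [MBot]. *)
Record rule := Rule { body : seq matom; head : matom }.
Definition program := seq rule.

Definition term_vars (t : term) : seq nat :=
  match t with TVar x => [:: x] | TCst _ => [::] end.

Fixpoint matom_vars (A : matom) : seq nat :=
  match A with
  | MTop | MBot => [::]
  | MRel _ ts => flatten (map term_vars ts)
  | MBoxMinus _ A | MBoxPlus _ A | MDiaMinus _ A | MDiaPlus _ A => matom_vars A
  | MSince _ A B | MUntil _ A B => matom_vars A ++ matom_vars B
  end.

Definition wf_range (r : itv) : Prop := forall x : rat, x \in r -> 0 <= x.

Fixpoint ranges_wf (A : matom) : Prop :=
  match A with
  | MTop | MBot | MRel _ _ => True
  | MBoxMinus r A | MBoxPlus r A | MDiaMinus r A | MDiaPlus r A =>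
      wf_range r /\ ranges_wf A
  | MSince r A B | MUntil r A B => wf_range r /\ ranges_wf A /\ ranges_wf B
  end.

Fixpoint boxed_rel (A : matom) : Prop :=
  match A with
  | MRel _ _ => True
  | MBoxMinus _ A | MBoxPlus _ A => boxed_rel A
  | _ => False
  end.

Definition rule_wf (r : rule) : Prop :=
  (head r = MBot \/ boxed_rel (head r)) /\
  ranges_wf (head r) /\ (forall A, inl A (body r) -> ranges_wf A) /\
  (forall x, x \in matom_vars (head r) ->
     exists A, inl A (body r) /\ x \in matom_vars A).

Definition program_wf (P : program) : Prop := forall r, inl r P -> rule_wf r.

Definition interp := nat -> seq nat -> rat -> Prop.
Definition assignment := nat -> nat.

Definition eval_term (s : assignment) (t : term) : nat :=
  match t with TVar x => s x | TCst c => c end.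

Fixpoint sat (M : interp) (s : assignment) (A : matom) (t : rat) : Prop :=
  match A with
  | MTop => True
  | MBot => False
  | MRel p ts => M p (map (eval_term s) ts) t
  | MBoxMinus r A => forall t', t - t' \in r -> sat M s A t'
  | MBoxPlus r A => forall t', t' - t \in r -> sat M s A t'
  | MDiaMinus r A => exists t', t - t' \in r /\ sat M s A t'
  | MDiaPlus r A => exists t', t' - t \in r /\ sat M s A t'
  | MSince r A B => exists t', t - t' \in r /\ sat M s B t' /\
                      forall t'', t' < t'' < t -> sat M s A t''
  | MUntil r A B => exists t', t' - t \in r /\ sat M s B t' /\
                      forall t'', t < t'' < t' -> sat M s A t''
  end.

Definition rule_model (M : interp) (r : rule) : Prop :=
  forall (s : assignment) (t : rat),
    (forall A, inl A (body r) -> sat M s A t) -> sat M s (head r) t.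

Definition program_model (M : interp) (P : program) : Prop :=
  forall r, inl r P -> rule_model M r.

(** Facts α@ι with α a ground atom (predicate, constants). *)
Definition gatom := (nat * seq nat)%type.
Definition fact := (gatom * itv)%type.
Definition factset := fact -> Prop.

Definition fact_model (M : interp) (f : fact) : Prop :=
  forall t : rat, t \in f.2 -> M f.1.1 f.1.2 t.

Definition set_model (M : interp) (B : factset) : Prop :=
  forall f, B f -> fact_model M f.

Definition entails (B : factset) (f : fact) : Prop :=
  forall M, set_model M B -> fact_model M f.

Definition consistent (P : program) (B : factset) : Prop :=
  exists M, program_model M P /\ set_model M B.

Definition program_consistent (P : program) : Prop :=
  exists M, program_model M P.

Definition dataset (D : factset) : Prop :=
  (exists s : seq fact, forall f, D f <-> inl f s) /\
  (forall f, D f -> exists t : rat, t \in f.2).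

Definition subset_fs (A B : factset) : Prop := forall f, A f -> B f.

Definition sub_itv (i j : itv) : Prop := forall t : rat, t \in i -> t \in j.

Definition normal_form (B : factset) : Prop :=
  forall f1 f2, B f1 -> B f2 -> f1 <> f2 -> f1.1 = f2.1 ->
    ~ exists i : itv, forall t : rat, t \in i <-> (t \in f1.2 \/ t \in f2.2).

Definition le_p (B' B : factset) : Prop := forall f, B' f -> entails B f.

Definition le_i (B' B : factset) : Prop :=
  le_p B' B /\
  forall f, B f -> forall f1 f2, B' f1 -> B' f2 ->
    f1.1 = f.1 -> f2.1 = f.1 -> sub_itv f1.2 f.2 -> sub_itv f2.2 f.2 -> f1 = f2.

Definition le_s (B' B : factset) : Prop := subset_fs B' B /\ le_i B' B.
Definition lt_s (B' B : factset) : Prop := le_s B' B /\ ~ le_s B B'.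

Definition s_repair (P : program) (D R : factset) : Prop :=
  normal_form R /\ consistent P R /\ le_s R D /\
  ~ exists R', consistent P R' /\ lt_s R R' /\ le_s R' D.

Definition s_conflict (P : program) (D C : factset) : Prop :=
  normal_form C /\ ~ consistent P C /\ le_s C D /\
  ~ exists C', ~ consistent P C' /\ lt_s C' C.

Definition max_consistent_subset (P : program) (D R : factset) : Prop :=
  subset_fs R D /\ consistent P R /\
  forall R', subset_fs R R' -> subset_fs R' D -> consistent P R' -> subset_fs R' R.

Definition min_inconsistent_subset (P : program) (D C : factset) : Prop :=
  subset_fs C D /\ ~ consistent P C /\
  forall C', subset_fs C' C -> ~ consistent P C' -> subset_fs C C'.

From mathcomp Require Import all_boot all_order all_algebra.
From Stdlib Require Import Classical.

Set Implicit Arguments.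
Unset Strict Implicit.

(* In a set of facts in normal form, two facts with the same atom and nested
   intervals coincide, since their union is the larger interval.  Hence for a
   subset of such a set the "at most one subfact" clause of [le_i] holds
   automatically and [le_p] is trivial, so [le_s] collapses to inclusion; the
   s-repairs and s-conflicts are then the inclusion-maximal consistent and
   inclusion-minimal inconsistent subsets. *)

Lemma normal_form_sub_itv_eq (B : factset) (f g : fact) :
  normal_form B -> B f -> B g -> g.1 = f.1 -> sub_itv g.2 f.2 -> g = f.
Proof.
move=> nfB Bf Bg eq_atom sub_gf; apply: NNPP => neq_gf.
apply: (nfB g f Bg Bf neq_gf eq_atom); exists f.2 => t.
by split=> [|[/sub_gf|]]; [right | |].
Qed.

Lemma normal_formS (A B : factset) :
  subset_fs A B -> normal_form B -> normal_form A.
Proof. by move=> AB nfB f1 f2 /AB A1 /AB A2; apply: nfB. Qed.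

Lemma le_sE (A B : factset) : normal_form B -> le_s A B <-> subset_fs A B.
Proof.
move=> nfB; split=> [[] // | AB]; split=> //; split=> [f /AB Bf M /(_ _ Bf) // |].
move=> f Bf f1 f2 /AB Bf1 /AB Bf2 eq1 eq2 sub1 sub2.
by rewrite (normal_form_sub_itv_eq nfB Bf Bf1 eq1 sub1)
           (normal_form_sub_itv_eq nfB Bf Bf2 eq2 sub2).
Qed.

Lemma lt_sE (A B : factset) :
  normal_form B -> lt_s A B <-> subset_fs A B /\ ~ subset_fs B A.
Proof.
move=> nfB; rewrite /lt_s (le_sE _ nfB).
split=> -[AB nBA]; split=> // BA; apply: nBA.
- exact/(le_sE _ (normal_formS AB nfB)).
- by case: BA.
Qed.

Lemma s_repairE (P : program) (D R : factset) :
  normal_form D -> s_repair P D R <-> max_consistent_subset P D R.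
Proof.
move=> nfD; rewrite /s_repair /max_consistent_subset (le_sE _ nfD).
split=> [[_ [consR [RD no_larger]]] | [RD [consR maxR]]].
  split=> //; split=> // R' RR' R'D consR'; apply: NNPP => nR'R.
  apply: no_larger; exists R'; split=> //; split; last exact/le_sE.
  exact/(lt_sE _ (normal_formS R'D nfD)).
split; first exact: normal_formS nfD.
do 2!split=> //; case=> R' [consR' [lt_RR' le_R'D]].
have R'D : subset_fs R' D by apply/le_sE.
have [RR' []] := (lt_sE _ (normal_formS R'D nfD)).1 lt_RR'.
exact: maxR.
Qed.

Lemma s_conflictE (P : program) (D C : factset) :
  normal_form D -> s_conflict P D C <-> min_inconsistent_subset P D C.
Proof.
move=> nfD; rewrite /s_conflict /min_inconsistent_subset (le_sE _ nfD).
split=> [[nfC [inconsC [CD no_smaller]]] | [CD [inconsC minC]]].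
  split=> //; split=> // C' C'C inconsC'; apply: NNPP => nCC'.
  by apply: no_smaller; exists C'; split=> //; apply/lt_sE.
have nfC := normal_formS CD nfD.
do 3!split=> //; case=> C' [inconsC' /(lt_sE _ nfC) [C'C []]].
exact: minC.
Qed.

Theorem mainTheorem2 (P : program) (D : factset)
  (HP : program_wf P) (HD : dataset D) (Hnf : normal_form D)
  (Hcons : program_consistent P) :
  (forall R : factset, s_repair P D R <-> max_consistent_subset P D R) /\
  (forall C : factset, s_conflict P D C <-> min_inconsistent_subset P D C).
Proof. by split=> X; [apply: s_repairE | apply: s_conflictE]. Qed.
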